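(* Let $a,b,c,d$ be integers with $a\neq 0$, $c\neq 0$, $\gcd(a,b)=1$, $\gcd(c,d)=1$, and let $k\ge 2$ be an integer. Then there are no rational numbers $A,B$ such that the polynomial identity $$S_{a,b}^k(Ax^2+B)=S_{c,d}^{2k+1}\!\left(x-\frac{d}{c}+\frac12\right)$$ holds in $\mathbb{Q}[x]$.
   Context: The Bernoulli polynomials $B_n(x)$ are defined by $\frac{t e^{tx}}{e^t-1}=\sum_{n\ge 0}B_n(x)\frac{t^n}{n!}$. For integers $a\neq 0$, $b$ with $\gcd(a,b)=1$ and an integer $k\ge 1$, define the polynomial $$S_{a,b}^k(x):=\frac{a^k}{k+1}\left(B_{k+1}\!\left(x+\frac{b}{a}\right)-B_{k+1}\!\left(\frac{b}{a}\right)\right)\in\mathbb{Q}[x].$$ *)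

From HB Require Import structures.
From mathcomp Require Import all_boot all_order all_algebra.
Set Implicit Arguments. Unset Strict Implicit. Unset Printing Implicit Defensive.
Import Order.TTheory GRing.Theory Num.Theory.
Local Open Scope ring_scope.

(* bern_seq n = [:: B_0; ...; B_n], Bernoulli numbers with t/(e^t-1)
   convention (B_1 = -1/2), via  sum_{k=0}^{n} C(n+1,k) B_k = 0 (n >= 1). *)
Fixpoint bern_seq (n : nat) : seq rat :=
  match n with
  | 0%N => [:: 1]
  | n'.+1 =>
      let s := bern_seq n' in
      rcons s (- (\sum_(k < n'.+1) ('C(n'.+2, k))%:R * s`_k) / (n'.+2)%:R)
  end.

Definition bernoulli_number (n : nat) : rat := (bern_seq n)`_n.

Definition bernoulli_poly (n : nat) : {poly rat} :=
  \sum_(k < n.+1) (('C(n, k))%:R * bernoulli_number k) *: 'X^(n - k).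

Definition S_poly (a b : int) (k : nat) : {poly rat} :=
  ((a%:~R : rat) ^+ k / (k.+1)%:R) *:
    ((bernoulli_poly k.+1 \Po ('X + ((b%:~R : rat) / a%:~R)%:P))
     - ((bernoulli_poly k.+1).[(b%:~R : rat) / a%:~R])%:P).

From HB Require Import structures.
From mathcomp Require Import all_boot all_order all_algebra.
From mathcomp Require Import ring lra zify.
Import Order.TTheory GRing.Theory Num.Theory.
Local Open Scope ring_scope.

(* The key general fact is a coefficient formula: for e > 0 and i <= n, the
   coefficient of x^(e(n-i)) in B_n(u x^e + h) is  u^(n-i) C(n,i) B_i(h).
   Both sides of the identity are of this shape (with e = 2, u = A,
   h = E := B + b/a on the left and e = 1, u = 1, h = 1/2 on the right), so
   comparing the coefficients of x^(2k+2), x^(2k), x^(2k-2) yields three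
   equations involving B_0, B_1, B_2 at E and B_0, B_2, B_4 at 1/2.  Pure
   algebra eliminates E and the scalars and leaves  A^2 (2k+1)(3-k) = 15,
   which has no rational solution: for k = 2 it says A^2 = 3, and for k >= 3
   the left-hand side is nonpositive. *)

Lemma bin_trinomial n i k : (k <= i)%N -> (i <= n)%N ->
  ('C(n, k) * 'C(n - k, i - k) = 'C(n, i) * 'C(i, k))%N.
Proof.
move=> le_ki le_in.
have fact_gt0 : (0 < k`! * (i - k)`! * (n - i)`!)%N by rewrite !muln_gt0 !fact_gt0.
apply/eqP; rewrite -(eqn_pmul2r fact_gt0); apply/eqP; transitivity n`!.
- rewrite -(bin_fact (_ : k <= n)%N); last exact: leq_trans le_in.
  rewrite -(bin_fact (_ : i - k <= n - k)%N); last by lia.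
  have -> : (n - k - (i - k) = n - i)%N by lia.
  ring.
- rewrite -(bin_fact le_in) -(bin_fact le_ki).
  ring.
Qed.

Lemma horner_bernoulli_poly n x : (bernoulli_poly n).[x] =
  \sum_(k < n.+1) ('C(n, k)%:R * bernoulli_number k) * x ^+ (n - k).
Proof. by rewrite /bernoulli_poly horner_sum; apply: eq_bigr => k _; rewrite hornerZ hornerXn. Qed.

Lemma comp_bernoulli_poly n q : bernoulli_poly n \Po q =
  \sum_(k < n.+1) ('C(n, k)%:R * bernoulli_number k) *: q ^+ (n - k).
Proof. by rewrite /bernoulli_poly linear_sum; apply: eq_bigr => k _; rewrite linearZ /= comp_Xn_poly. Qed.

Lemma coef_binomial_power (R : comNzRingType) (u h : R) e p r : (0 < e)%N ->
  ((u *: 'X^e + h%:P) ^+ p)`_(e * r) = u ^+ r * h ^+ (p - r) *+ 'C(p, r).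
Proof.
move=> e_gt0; rewrite addrC exprDn coef_sum.
under eq_bigr => i _ do
  rewrite coefMn -rmorphXn exprZn -exprM coefCM coefZ coefXn eqn_pmul2l //.
have [le_rp | lt_pr] := ltnP r p.+1.
  rewrite (bigD1 (Ordinal le_rp)) //= eqxx mulr1 mulrC big1 ?addr0 // => i ne_ir.
  have -> : (r == i) = false by apply: contraNF ne_ir => /eqP ri; apply/eqP/val_inj.
  by rewrite !mulr0 mul0rn.
rewrite bin_small // mulr0n big1 // => i _.
by rewrite gtn_eqF ?mulr0 ?mul0rn // (leq_trans (ltn_ord i)).
Qed.

Lemma coef_bernoulli_comp n e (u h : rat) i : (0 < e)%N -> (i <= n)%N ->
  (bernoulli_poly n \Po (u *: 'X^e + h%:P))`_(e * (n - i)) =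
  u ^+ (n - i) * 'C(n, i)%:R * (bernoulli_poly i).[h].
Proof.
move=> e_gt0 le_in.
rewrite comp_bernoulli_poly coef_sum horner_bernoulli_poly.
rewrite (big_ord_widen n.+1
  (fun k : nat => 'C(i, k)%:R * bernoulli_number k * h ^+ (i - k)) (_ : i.+1 <= n.+1)%N) //.
rewrite mulr_sumr [RHS]big_mkcond; apply: eq_bigr => k _ /=.
rewrite coefZ coef_binomial_power // ltnS.
have [le_ki | lt_ik] := leqP k i.
  rewrite -(bin_sub (_ : n - i <= n - k)%N); last by lia.
  have -> : (n - k - (n - i) = i - k)%N by lia.
  have trinomial : 'C(n, k)%:R * 'C(n - k, i - k)%:R = 'C(n, i)%:R * 'C(i, k)%:R :> rat.
    by rewrite -!natrM bin_trinomial.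
  rewrite -mulr_natr; transitivity ('C(n, k)%:R * 'C(n - k, i - k)%:R *
    (bernoulli_number k * u ^+ (n - i) * h ^+ (i - k))); first by ring.
  by rewrite trinomial; ring.
by rewrite (@bin_small (n - k)) ?mulr0n ?mulr0 //; have := ltn_ord k; lia.
Qed.

Lemma bern_seqS n : bern_seq n.+1 = rcons (bern_seq n)
  (- (\sum_(k < n.+1) 'C(n.+2, k)%:R * (bern_seq n)`_k) / n.+2%:R).
Proof. by []. Qed.

Lemma bern_seq1 : bern_seq 1 = [:: 1; -(1/2)].
Proof. by rewrite bern_seqS big_ord_recr big_ord0 /=; congr [:: _; _]; field. Qed.

Lemma bern_seq2 : bern_seq 2 = [:: 1; -(1/2); 1/6].
Proof. by rewrite bern_seqS bern_seq1 !big_ord_recr big_ord0 /=; congr [:: _; _; _]; field. Qed.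

Lemma bern_seq3 : bern_seq 3 = [:: 1; -(1/2); 1/6; 0].
Proof.
by rewrite bern_seqS bern_seq2 !big_ord_recr big_ord0 /=; congr [:: _; _; _; _]; field.
Qed.

Lemma bern_seq4 : bern_seq 4 = [:: 1; -(1/2); 1/6; 0; -(1/30)].
Proof.
by rewrite bern_seqS bern_seq3 !big_ord_recr big_ord0 /=; congr [:: _; _; _; _; _]; field.
Qed.

Lemma bernoulli_poly0 x : (bernoulli_poly 0).[x] = 1.
Proof. by rewrite horner_bernoulli_poly big_ord1 /= mulr1. Qed.

Lemma bernoulli_poly1 x : (bernoulli_poly 1).[x] = x - 1/2.
Proof.
rewrite horner_bernoulli_poly !big_ord_recr big_ord0 /= /bernoulli_number bern_seq1 /=.
by rewrite bin0 binn subn0 subnn; field.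
Qed.

Lemma bernoulli_poly2 x : (bernoulli_poly 2).[x] = x ^+ 2 - x + 1/6.
Proof.
rewrite horner_bernoulli_poly !big_ord_recr big_ord0 /= /bernoulli_number bern_seq1 bern_seq2 /=.
by rewrite bin0 bin1 binn subn0 subnn !subSS subn0; field.
Qed.

Lemma bernoulli_poly4_half : (bernoulli_poly 4).[1/2] = 7/240.
Proof.
rewrite horner_bernoulli_poly !big_ord_recr big_ord0 /= /bernoulli_number.
rewrite bern_seq1 bern_seq2 bern_seq3 bern_seq4 /= -[ 'C(4, 2)]/6%N.
by rewrite bin0 bin1 binSn binn subn0 subnn !subSS !subn0; field.
Qed.

Lemma natr_bin2 (R : numFieldType) n : 'C(n, 2)%:R = n%:R * (n%:R - 1) / 2 :> R.
Proof.
elim: n => [|n IHn]; first by rewrite bin0n mul0r mul0r.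
by rewrite binS natrD IHn bin1 -natr1; field.
Qed.

Lemma natr_bin3 (R : numFieldType) n :
  'C(n, 3)%:R = n%:R * (n%:R - 1) * (n%:R - 2) / 6 :> R.
Proof.
elim: n => [|n IHn]; first by rewrite bin0n !mul0r.
by rewrite binS natrD IHn natr_bin2 -natr1; field.
Qed.

Lemma natr_bin4 (R : numFieldType) n :
  'C(n, 4)%:R = n%:R * (n%:R - 1) * (n%:R - 2) * (n%:R - 3) / 24 :> R.
Proof.
elim: n => [|n IHn]; first by rewrite bin0n !mul0r.
by rewrite binS natrD IHn natr_bin3 -natr1; field.
Qed.

Definition S_scale (a : int) (k : nat) : rat := (a%:~R : rat) ^+ k / k.+1%:R.

Lemma coef_S_poly_comp a b k q t : t != 0%N ->
  (S_poly a b k \Po q)`_t = S_scale a k *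
    (bernoulli_poly k.+1 \Po (q + ((b%:~R : rat) / a%:~R)%:P))`_t.
Proof.
move=> t_neq0; rewrite /S_poly comp_polyZ comp_polyB comp_polyC -comp_polyA.
by rewrite comp_polyD comp_polyX comp_polyC coefZ coefB coefC (negbTE t_neq0) subr0.
Qed.

Section CoefficientComparison.

Variables (a b c d : int) (k : nat) (A B : rat).
Hypothesis S_identity : S_poly a b k \Po (A *: 'X^2 + B%:P)
  = S_poly c d (2 * k).+1 \Po ('X - ((d%:~R : rat) / c%:~R)%:P + (1 / 2 : rat)%:P).

Let E : rat := B + (b%:~R : rat) / a%:~R.

Lemma S_identity_coef i : (i <= k)%N ->
  S_scale a k * (A ^+ (k.+1 - i) * 'C(k.+1, i)%:R * (bernoulli_poly i).[E]) =
  S_scale c (2 * k).+1 * ('C((2 * k).+2, 2 * i)%:R * (bernoulli_poly (2 * i)).[1/2]).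
Proof.
move=> le_ik.
have := congr1 (fun p : {poly rat} => p`_(2 * (k.+1 - i))) S_identity.
rewrite /= !coef_S_poly_comp; [|lia|lia].
rewrite -addrA -polyCD coef_bernoulli_comp //; last lia.
set h := (d%:~R : rat) / c%:~R.
have -> : 'X - h%:P + (1/2)%:P + h%:P = 1 *: 'X^1 + (1/2)%:P.
  by rewrite scale1r expr1 addrAC subrK.
have -> : (2 * (k.+1 - i) = 1 * ((2 * k).+2 - 2 * i))%N by lia.
by rewrite coef_bernoulli_comp ?expr1n ?mul1r //; lia.
Qed.

End CoefficientComparison.

(* Elimination: the three top-coefficient equations, written with P = A^(k-1),
   K = k, scalars al and ga, force  A^2 (2K+1)(3-K) = 15. *)
Lemma top_coefficients_constraint (R : numFieldType) (K al ga P A E : R) :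
  K != 0 -> K + 1 != 0 -> ga != 0 ->
  al * P * A ^+ 2 = ga ->
  al * P * A * (K + 1) * (E - 1/2) = ga * ((K + 1) * (2 * K + 1) * (-1/12)) ->
  al * P * ((K + 1) * K / 2) * (E ^+ 2 - E + 1/6) =
    ga * ((K + 1) * K * (2 * K + 1) * (2 * K - 1) / 6 * (7/240)) ->
  A ^+ 2 * (2 * K + 1) * (3 - K) = 15.
Proof.
move=> K_neq0 K1_neq0 ga_neq0 h0 h1 h2.
have alP_neq0 : al * P != 0.
  by apply: contra_neq ga_neq0 => alP0; rewrite -h0 alP0 mul0r.
have A_neq0 : A != 0.
  by apply: contra_neq ga_neq0 => A0; rewrite -h0 A0 expr2 !mulr0.
have linear_term : E - 1/2 = - A * (2 * K + 1) / 12.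
  have nz : al * P * A * (K + 1) != 0 by rewrite mulf_neq0 // mulf_neq0.
  by apply: (mulfI nz); rewrite h1 -h0; field.
have quadratic_term : (E - 1/2) ^+ 2 - 1/12 = A ^+ 2 * (2 * K + 1) * (2 * K - 1) * 7/720.
  have nz : al * P * ((K + 1) * K / 2) != 0.
    by rewrite mulf_neq0 // !mulf_neq0 // invr_eq0 pnatr_eq0.
  apply: (mulfI nz); transitivity (al * P * ((K + 1) * K / 2) * (E ^+ 2 - E + 1/6)); first by field.
  by rewrite h2 -h0; field.
rewrite linear_term in quadratic_term.
apply/eqP; rewrite -subr_eq0; apply/eqP.
transitivity (180 * (((- A * (2 * K + 1) / 12) ^+ 2 - 1/12) -
                     A ^+ 2 * (2 * K + 1) * (2 * K - 1) * 7/720)); first by field.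
by rewrite quadratic_term subrr mulr0.
Qed.

(* An equation is implied by any equation with the same difference of sides;
   this lets [field] match a coefficient equation against its normal form. *)
Lemma eq_of_sub_eq (R : zmodType) (x y u v : R) : u = v -> x - y = u - v -> x = y.
Proof. by move=> -> /eqP; rewrite subrr subr_eq0 => /eqP. Qed.

(* A prime is not a rational square: first over the naturals, by the parity of
   the p-adic valuation, then over the rationals via numerator/denominator. *)
Lemma sqr_nat_neq_prime_mul m p n : prime p -> (0 < n)%N -> (m ^ 2 != p * n ^ 2)%N.
Proof.
move=> p_prime n_gt0; apply/eqP => sq_eq.
have m_gt0 : (0 < m)%N.
  have : (0 < m ^ 2)%N by rewrite sq_eq muln_gt0 prime_gt0 // expn_gt0 n_gt0.
  by rewrite expn_gt0 orbF.
have := congr1 (logn p) sq_eq.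
rewrite lognM ?(prime_gt0 p_prime) ?expn_gt0 ?n_gt0 // !lognX (logn_prime _ p_prime) eqxx.
lia.
Qed.

Lemma sqr_rat_neq_prime p (x : rat) : prime p -> x ^+ 2 != p%:R.
Proof.
move=> p_prime; apply/eqP => sq_eq.
have den_neq0 : (denq x)%:~R != 0 :> rat by rewrite intr_eq0 denq_neq0.
have int_eq : numq x ^+ 2 = p%:Z * denq x ^+ 2.
  apply: (@intr_inj rat); rewrite rmorphXn rmorphM /= rmorphXn /=.
  rewrite -[(p%:Z)%:~R]/(p%:R : rat) -sq_eq.
  by rewrite -{2}(divq_num_den x); field.
have den_gt0 : (0 < `|denq x|)%N by rewrite absz_gt0 denq_neq0.
move/eqP: (sqr_nat_neq_prime_mul `|numq x| _ _ p_prime den_gt0); apply.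
by have := congr1 absz int_eq; rewrite abszM !abszX.
Qed.

Lemma constraint_unsolvable (k : nat) (A : rat) : (2 <= k)%N ->
  A ^+ 2 * (2 * k%:R + 1) * (3 - k%:R) != 15.
Proof.
move=> k_ge2; apply/eqP => constraint.
have [k_le2 | k_gt2] := leqP k 2.
  have k_eq2 : k = 2%N by apply/eqP; rewrite eqn_leq k_le2 k_ge2.
  rewrite k_eq2 in constraint.
  have sq_eq : A ^+ 2 = 3%:R by lra.
  by move/eqP: (@sqr_rat_neq_prime 3 A isT).
have k_ge3 : 3 <= k%:R :> rat by rewrite (ler_nat rat 3).
have : 0 <= A ^+ 2 * ((2 * k%:R + 1) * (k%:R - 3)).
  by rewrite mulr_ge0 ?sqr_ge0 // mulr_ge0 //; lra.
lra.
Qed.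

Theorem mainTheorem7 (a b c d : int) (k : nat) :
  a != 0 -> c != 0 -> coprimez a b -> coprimez c d -> (2 <= k)%N ->
  ~ exists A B : rat,
      S_poly a b k \Po (A *: 'X^2 + B%:P)
      = S_poly c d (2 * k).+1
          \Po ('X - ((d%:~R : rat) / c%:~R)%:P + (1 / 2 : rat)%:P).
Proof.
move=> _ c_neq0 _ _ k_ge2 [A [B S_identity]].
have coef := @S_identity_coef a b c d k A B S_identity.
set E := B + (b%:~R : rat) / a%:~R in coef.
have scale_neq0 : S_scale c (2 * k).+1 != 0.
  by rewrite mulf_neq0 ?expf_neq0 ?intr_eq0 // invr_eq0 pnatr_eq0.
move/eqP: (constraint_unsolvable k A k_ge2); apply.
apply: (@top_coefficients_constraint _ k%:R (S_scale a k) _ (A ^+ k.-1) A E _ _ scale_neq0).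
- by rewrite pnatr_eq0 -lt0n; lia.
- by rewrite natr1 pnatr_eq0.
- apply: (@eq_of_sub_eq rat _ _ _ _ (coef 0%N isT)).
  have -> : A ^+ (k.+1 - 0) = A ^+ k.-1 * A ^+ 2 by rewrite -exprD; congr (_ ^+ _); lia.
  by rewrite muln0 !bin0 !bernoulli_poly0; field.
- apply: (@eq_of_sub_eq rat _ _ _ _ (coef 1%N (ltnW k_ge2))).
  have -> : A ^+ (k.+1 - 1) = A ^+ k.-1 * A by rewrite -exprSr; congr (_ ^+ _); lia.
  by rewrite muln1 bin1 natr_bin2 bernoulli_poly1 bernoulli_poly2 -!natr1 natrM; field.
- apply: (@eq_of_sub_eq rat _ _ _ _ (coef 2%N k_ge2)).
  have -> : (k.+1 - 2 = k.-1)%N by lia.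
  rewrite -[(2 * 2)%N]/4%N natr_bin2 natr_bin4 bernoulli_poly2 bernoulli_poly4_half.
  by rewrite -!natr1 natrM; field.
Qed.
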